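(* Let $\mathcal H$ be a real Hilbert space, $T:\mathcal H\rightrightarrows\mathcal H$ maximal monotone, $a,b\ge0$, $\psi(\rho,z):=a\rho^2+b\rho+\big(\rho\|J_{\rho T}(z)-z\|\big)^2$ for $\rho>0$, and let $z\in\mathcal H$ with $0\notin T(z)$. Then: (a) $\psi(\rho,z)>0$ for every $\rho>0$; (b) $\rho\mapsto\psi(\rho,z)$ is strictly increasing and continuous on $(0,\infty)$, with $\psi(\rho,z)\to0$ as $\rho\to0^+$ and $\psi(\rho,z)\to\infty$ as $\rho\to\infty$; (c) for any $0<\theta_-<\theta_+<\infty$, the set of $\rho>0$ with $\theta_-\le\psi(\rho,z)\le\theta_+$ is a closed interval $[\rho_-,\rho_+]$ where $\psi(\rho_-,z)=\theta_-$ and $\psi(\rho_+,z)=\theta_+$, and $\rho_+/\rho_-\ge(\theta_+/\theta_-)^{1/4}$.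
   Context: $J_{\rho T}:=(\rho T+I)^{-1}$ denotes the resolvent of $\rho T$. *)

From HB Require Import structures.
From mathcomp Require Import all_boot all_order all_algebra.
From mathcomp Require Import all_classical all_reals all_analysis.
Set Implicit Arguments. Unset Strict Implicit. Unset Printing Implicit Defensive.
Import Order.TTheory GRing.Theory Num.Theory.
Import numFieldNormedType.Exports.
Local Open Scope classical_set_scope.
Local Open Scope ring_scope.

(* [ip] is a real inner product on the normed space [H] inducing its norm.
   Together with completeness of [H] this makes [H] a real Hilbert space. *)
Definition is_inner_product (R : realType) (H : normedModType R)
  (ip : H -> H -> R) : Prop :=
  (forall x y, ip x y = ip y x) /\
  (forall (a : R) (x y z : H), ip (a *: x + y) z = a * ip x z + ip y z) /\
  (forall x, ip x x = `|x| ^+ 2).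

Definition monotone_op (R : realType) (H : normedModType R)
  (ip : H -> H -> R) (T : H -> set H) : Prop :=
  forall x y u v, T x u -> T y v -> 0 <= ip (x - y) (u - v).

Definition maximal_monotone (R : realType) (H : normedModType R)
  (ip : H -> H -> R) (T : H -> set H) : Prop :=
  monotone_op ip T /\
  forall S : H -> set H, monotone_op ip S ->
    (forall x u, T x u -> S x u) -> S = T.

(* Resolvent J_{rho T} = (rho T + I)^{-1}: J_{rho T}(z) is the (for maximal
   monotone T and rho > 0, unique, by Minty's theorem) point x with
   z \in rho T(x) + x, i.e. z - x \in rho T(x). *)
Definition resolvent (R : realType) (H : normedModType R)
  (T : H -> set H) (rho : R) (z : H) : H :=
  xget 0 [set x | exists u, T x u /\ z = rho *: u + x].

Definition psi (R : realType) (H : normedModType R) (T : H -> set H)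
  (a b : R) (rho : R) (z : H) : R :=
  a * rho ^+ 2 + b * rho + (rho * `|resolvent T rho z - z|) ^+ 2.

(* The resolvent is well defined by Minty's theorem, proved by minimising the
   Fitzpatrick function of [T] regularised by [(|x|^2 + |u|^2) / 2]: this
   function is strongly convex, so minimising sequences are Cauchy.
   Monotonicity of [T] and Cauchy-Schwarz show that [d(rho) = |J_{rho T} z - z|]
   is nondecreasing and [d(rho) / rho] is nonincreasing, and [d > 0] since
   [0 \notin T z].  These two properties alone make [psi] strictly increasing
   and continuous with the stated limits, and make [psi(rho) / rho^4]
   nonincreasing, which is the ratio bound once the intermediate value theorem
   yields [rho_-, rho_+]. *)

From HB Require Import structures.
From mathcomp Require Import all_boot all_order all_algebra.
From mathcomp Require Import all_classical all_reals all_analysis.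
From mathcomp Require Import ring lra.
Import Order.TTheory GRing.Theory Num.Theory.
Import numFieldNormedType.Exports.
Local Open Scope classical_set_scope.
Local Open Scope ring_scope.

Set Implicit Arguments.
Unset Strict Implicit.

Section InnerProduct.
Variables (R : realType) (H : normedModType R) (ip : H -> H -> R).
Hypothesis ipP : is_inner_product ip.

Lemma ipC x y : ip x y = ip y x.
Proof. by case: ipP. Qed.

Lemma ip_norm x : ip x x = `|x| ^+ 2.
Proof. by case: ipP => _ []. Qed.

Lemma ipZDl a x y z : ip (a *: x + y) z = a * ip x z + ip y z.
Proof. by case: ipP => _ []. Qed.

Lemma ip0l z : ip 0 z = 0.
Proof. by have := ipZDl 1 0 0 z; rewrite scaler0 addr0 mul1r; lra. Qed.

Lemma ipDl x y z : ip (x + y) z = ip x z + ip y z.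
Proof. by rewrite -[x]scale1r ipZDl mul1r scale1r. Qed.

Lemma ipZl a x z : ip (a *: x) z = a * ip x z.
Proof. by rewrite -[a *: x]addr0 ipZDl ip0l addr0. Qed.

Lemma ipNl x z : ip (- x) z = - ip x z.
Proof. by rewrite -scaleN1r ipZl mulN1r. Qed.

Lemma ipBl x y z : ip (x - y) z = ip x z - ip y z.
Proof. by rewrite ipDl ipNl. Qed.

Lemma ip0r z : ip z 0 = 0.
Proof. by rewrite ipC ip0l. Qed.

Lemma ipDr x y z : ip z (x + y) = ip z x + ip z y.
Proof. by rewrite ipC ipDl !(ipC z). Qed.

Lemma ipZr a x z : ip z (a *: x) = a * ip z x.
Proof. by rewrite ipC ipZl ipC. Qed.

Lemma ipNr x z : ip z (- x) = - ip z x.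
Proof. by rewrite ipC ipNl ipC. Qed.

Lemma ipBr x y z : ip z (x - y) = ip z x - ip z y.
Proof. by rewrite ipDr ipNr. Qed.

Definition ipE := (ipDl, ipDr, ipBl, ipBr, ipZl, ipZr, ipNl, ipNr).

Lemma ip_le_normM x y : ip x y <= `|x| * `|y|.
Proof.
have [->|x0] := eqVneq x 0; first by rewrite ip0l normr0 mul0r.
have [->|y0] := eqVneq y 0; first by rewrite ip0r normr0 mulr0.
have xy0 : 0 < `|x| * `|y| by rewrite mulr_gt0 // normr_gt0.
have := sqr_ge0 `| `|y| *: x - `|x| *: y|.
rewrite -ip_norm !ipE !ip_norm (ipC y x) => h.
suff : 0 <= (`|x| * `|y|) * (`|x| * `|y| - ip x y) by rewrite pmulr_rge0 // subr_ge0.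
nra.
Qed.

Lemma normr_ip_le x y : `|ip x y| <= `|x| * `|y|.
Proof.
by rewrite ler_norml ip_le_normM andbT lerNl -ipNl -(normrN x) ip_le_normM.
Qed.

Lemma sqr_norm_convex_comb (t : R) (x y : H) : `|(1 - t) *: x + t *: y| ^+ 2 =
  (1 - t) * `|x| ^+ 2 + t * `|y| ^+ 2 - t * (1 - t) * `|x - y| ^+ 2.
Proof. by rewrite -!ip_norm !ipE (ipC y x); ring. Qed.

Lemma cvg_ipl (T : Type) (F : set_system T) {FF : Filter F} (f : T -> H) p v :
  f @ F --> p -> ip (f t) v @[t --> F] --> ip p v.
Proof.
move=> /cvgrPdist_lt fp; apply/cvgrPdist_lt => e e0.
have v1 : 0 < `|v| + 1 by rewrite ltr_wpDl.
apply: filterS (fp _ (divr_gt0 e0 v1)) => t ht.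
rewrite -ipBl; apply: le_lt_trans (normr_ip_le _ _) _.
rewrite -(ltr_pM2r v1) divfK ?gt_eqF // in ht.
by apply: le_lt_trans ht; rewrite ler_wpM2l // lerDl.
Qed.

Lemma cvg_ipr (T : Type) (F : set_system T) {FF : Filter F} (f : T -> H) p v :
  f @ F --> p -> ip v (f t) @[t --> F] --> ip v p.
Proof.
by move=> fp; rewrite ipC; under eq_fun do rewrite ipC; apply: cvg_ipl.
Qed.

End InnerProduct.

Section MonotoneClosure.
Variables (R : realType) (H : normedModType R) (ip : H -> H -> R).
Hypothesis ipP : is_inner_product ip.

Definition monotonically_closed (T : H -> set H) :=
  monotone_op ip T /\
  forall x0 u0, (forall x u, T x u -> 0 <= ip (x - x0) (u - u0)) -> T x0 u0.

Lemma maximal_monotone_closed T : maximal_monotone ip T -> monotonically_closed T.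
Proof.
move=> [mon max]; split => // x0 u0 rel0.
pose S x u := T x u \/ (x = x0 /\ u = u0).
suff <- : S = T by right.
apply: max => [x y u v|x u]; last by left.
case=> [Txu|[-> ->]] [Tyv|[-> ->]]; first exact: mon.
- exact: rel0.
- by rewrite -opprB -(opprB v) (ipNl ipP) (ipNr ipP) opprK; apply: rel0.
- by rewrite subrr (ip0l ipP).
Qed.

End MonotoneClosure.

Lemma cvg_sqr_dist_le (R : realType) (V : completeNormedModType R)
    (x : nat -> V) (e : nat -> R) :
  e n @[n --> \oo] --> 0 -> (forall n k, `|x n - x k| ^+ 2 <= e n + e k) ->
  cvg (x n @[n --> \oo]).
Proof.
move=> /cvgrPdist_lt e0 dx; apply: cauchy_cvg; apply: cauchy_exP => r r0.
have [N _ eN] := e0 _ (divr_gt0 (exprn_gt0 2 r0) (ltr0Sn R 1)).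
have eN' n : (N <= n)%N -> e n < r ^+ 2 / 2.
  by move=> /eN /=; rewrite sub0r normrN; apply: le_lt_trans (ler_norm _).
exists (x N); exists N => // n Nn /=; rewrite -ball_normE /=.
rewrite -(ltr_pXn2r (n := 2)) ?nnegrE ?(ltW r0) //.
apply: le_lt_trans (dx N n) _.
by have := eN' N (leqnn N); have := eN' n Nn; lra.
Qed.

Section Fitzpatrick.
Variables (R : realType) (H : normedModType R) (ip : H -> H -> R).
Hypothesis ipP : is_inner_product ip.
Variable T : H -> set H.

(* [fitzpatrick_le x u c] states [F_T(x, u) + (|x|^2 + |u|^2) / 2 <= c], where
   [F_T(x, u) = sup {<x, v> + <y, u> - <y, v> | T y v}] is the Fitzpatrick
   function of [T]. *)
Definition fitzpatrick_le x u c := forall y v, T y v ->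
  ip x v + ip y u - ip y v + (`|x| ^+ 2 + `|u| ^+ 2) / 2 <= c.

Lemma fitzpatrick_le_trans x u c c' :
  fitzpatrick_le x u c -> c <= c' -> fitzpatrick_le x u c'.
Proof. by move=> xuc cc' y v Tyv; apply: le_trans (xuc _ _ Tyv) cc'. Qed.

Lemma fitzpatrick_le_graph y v : monotone_op ip T -> T y v ->
  fitzpatrick_le y v (ip y v + (`|y| ^+ 2 + `|v| ^+ 2) / 2).
Proof.
move=> mon Tyv y' v' /(mon _ _ _ _ Tyv).
by rewrite !(ipE ipP) (ipC ipP y' v); lra.
Qed.

Lemma fitzpatrick_le_convex x1 u1 c1 x2 u2 c2 t :
  fitzpatrick_le x1 u1 c1 -> fitzpatrick_le x2 u2 c2 -> 0 <= t <= 1 ->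
  fitzpatrick_le ((1 - t) *: x1 + t *: x2) ((1 - t) *: u1 + t *: u2)
    ((1 - t) * c1 + t * c2 - t * (1 - t) * (`|x1 - x2| ^+ 2 + `|u1 - u2| ^+ 2) / 2).
Proof.
move=> xuc1 xuc2 /andP[t0 t1] y v Tyv.
have t1' : 0 <= 1 - t by rewrite subr_ge0.
have {xuc1}/(ler_wpM2l t1') := xuc1 _ _ Tyv.
have {xuc2}/(ler_wpM2l t0) := xuc2 _ _ Tyv.
by rewrite !(sqr_norm_convex_comb ipP) !(ipE ipP); nra.
Qed.

(* [F_T(x, u) >= <x, u>]: either a point of the graph of [T] witnesses it, or
   [(x, u)] is monotonically related to the whole graph, hence lies on it. *)
Lemma fitzpatrick_le_lb x u c : monotonically_closed ip T ->
  fitzpatrick_le x u c -> ip x u + (`|x| ^+ 2 + `|u| ^+ 2) / 2 <= c.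
Proof.
move=> [_ closed] xuc.
have [[y [v [Tyv]]]|] := pselect (exists y v, T y v /\ ip (x - y) (u - v) <= 0).
  by have := xuc _ _ Tyv; rewrite !(ipE ipP) (ipC ipP y u); lra.
move=> nrel; have /xuc : T x u.
  apply: closed => y v Tyv; rewrite -opprB -(opprB u) (ipNl ipP) (ipNr ipP) opprK.
  by rewrite leNgt; apply/negP => /ltW rel; apply: nrel; exists y, v.
lra.
Qed.

Lemma fitzpatrick_le_ge0 x u c : monotonically_closed ip T ->
  fitzpatrick_le x u c -> 0 <= c.
Proof.
move=> /fitzpatrick_le_lb/[apply]; have := normr_ip_le ipP x u.
by rewrite ler_norml => /andP[+ _]; have := sqr_ge0 (`|x| - `|u|); nra.
Qed.

Lemma fitzpatrick_le_cvg (x u : nat -> H) (c : nat -> R) p q m :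
  x n @[n --> \oo] --> p -> u n @[n --> \oo] --> q -> c n @[n --> \oo] --> m ->
  (forall n, fitzpatrick_le (x n) (u n) (c n)) -> fitzpatrick_le p q m.
Proof.
move=> xp uq cm xuc y v Tyv.
have lhs_cvg : (ip (x n) v + ip y (u n) - ip y v + (`|x n| ^+ 2 + `|u n| ^+ 2) / 2)
    @[n --> \oo] --> (ip p v + ip y q - ip y v + (`|p| ^+ 2 + `|q| ^+ 2) / 2).
  apply: cvgD; first apply: cvgB; first apply: cvgD.
  - exact: (cvg_ipl ipP).
  - exact: (cvg_ipr ipP).
  - exact: cvg_cst.
  by apply: cvgM; [apply: cvgD; apply: cvgM; apply: cvg_norm|apply: cvg_cst].
by apply: (ler_cvg_to lhs_cvg cm); apply: nearW => n; apply: xuc.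
Qed.

Section Minimizer.
Variable m : R.
Hypothesis m_min : forall x u c, fitzpatrick_le x u c -> m <= c.

Lemma fitzpatrick_le_midpoint x1 u1 e1 x2 u2 e2 :
  fitzpatrick_le x1 u1 (m + e1) -> fitzpatrick_le x2 u2 (m + e2) ->
  `|x1 - x2| ^+ 2 + `|u1 - u2| ^+ 2 <= 4 * (e1 + e2).
Proof.
move=> xue1 xue2; have t01 : 0 <= (2^-1 : R) <= 1.
  by rewrite invr_ge0 ler0n invf_le1 ?ltr0n ?ler1n.
by have /m_min := fitzpatrick_le_convex xue1 xue2 t01; lra.
Qed.

Lemma fitzpatrick_le_min_graph p q y v :
  monotone_op ip T -> fitzpatrick_le p q m -> T y v ->
  m + (`|p - y| ^+ 2 + `|q - v| ^+ 2) / 2 <= ip y v + (`|y| ^+ 2 + `|v| ^+ 2) / 2.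
Proof.
move=> mon pqm Tyv; set D := _ + _ ^+ 2; set c := ip y v + _.
have D0 : 0 <= D by rewrite addr_ge0 ?sqr_ge0.
(* Compare with the convex combination at weight [t = e / (e + D)] and let [e -> 0]. *)
rewrite -lerBrDr; apply/ler_addgt0Pr => e e0.
have eD : 0 < e + D by lra.
pose t := e / (e + D).
have t0 : 0 < t by rewrite divr_gt0.
have tD : t * (e + D) = e by rewrite divfK ?gt_eqF.
have t01 : 0 <= t <= 1 by rewrite ltW //= ler_pdivrMr // mul1r; lra.
have /m_min := fitzpatrick_le_convex pqm (fitzpatrick_le_graph mon Tyv) t01.
rewrite -/D -/c => hm.
have : t * (m - (c - (1 - t) * D / 2)) <= 0 by nra.
by rewrite pmulr_rle0 // subr_le0; nra.
Qed.

End Minimizer.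

End Fitzpatrick.

Section Minty.
Variables (R : realType) (H : completeNormedModType R) (ip : H -> H -> R).
Hypothesis ipP : is_inner_product ip.
Variable T : H -> set H.

Lemma fitzpatrick_le_minimizer : monotonically_closed ip T -> (exists y v, T y v) ->
  exists p q m, fitzpatrick_le ip T p q m /\
    forall x u c, fitzpatrick_le ip T x u c -> m <= c.
Proof.
move=> Tclosed [y0 [v0 Tyv0]].
pose C := [set c | exists x u, fitzpatrick_le ip T x u c].
have C_inf : has_inf C.
  split; last by exists 0 => c [x [u /(fitzpatrick_le_ge0 ipP Tclosed)]].
  exists (ip y0 v0 + (`|y0| ^+ 2 + `|v0| ^+ 2) / 2), y0, v0.
  by apply: (fitzpatrick_le_graph ipP) => //; case: Tclosed.
pose m := inf C.
have m_min x u c : fitzpatrick_le ip T x u c -> m <= c.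
  by move=> xuc; apply: ge_inf; [case: C_inf|exists x, u].
have /choice[xu xuP] n : exists xu, fitzpatrick_le ip T xu.1 xu.2 (m + harmonic n).
  have [c [x [u xuc]] cm] := inf_adherent (harmonic_gt0 n) C_inf.
  by exists (x, u); apply: fitzpatrick_le_trans xuc _; apply: ltW.
have e0 : (4 * harmonic n : R) @[n --> \oo] --> (0 : R).
  by rewrite -(mulr0 4); apply: cvgM; [apply: cvg_cst|apply: cvg_harmonic].
have dist_le n k : `|(xu n).1 - (xu k).1| ^+ 2 + `|(xu n).2 - (xu k).2| ^+ 2
    <= 4 * harmonic n + 4 * harmonic k.
  by rewrite -mulrDr; exact: (fitzpatrick_le_midpoint ipP m_min (xuP n) (xuP k)).
have /cvg_ex[p xp] : cvg ((xu n).1 @[n --> \oo]).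
  apply: cvg_sqr_dist_le e0 _ => n k; apply: le_trans (dist_le n k).
  by rewrite lerDl sqr_ge0.
have /cvg_ex[q uq] : cvg ((xu n).2 @[n --> \oo]).
  apply: cvg_sqr_dist_le e0 _ => n k; apply: le_trans (dist_le n k).
  by rewrite lerDr sqr_ge0.
exists p, q, m; split => //.
apply: (fitzpatrick_le_cvg ipP) xp uq _ xuP.
by rewrite -[X in _ --> X]addr0; apply: cvgD; [apply: cvg_cst|apply: cvg_harmonic].
Qed.

(* The minimizer [(p, q)] of [F_T(x, u) + (|x|^2 + |u|^2) / 2] satisfies
   [p = - q] and [(- q, - p) \in gr T]. *)
Theorem minty_zero : monotonically_closed ip T -> exists x, T x (- x).
Proof.
move=> Tclosed; have [mon closed] := Tclosed.
have [gr_ne|gr0] := pselect (exists y v, T y v); last first.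
  by exists 0; rewrite oppr0; apply: closed => x u Txu; case: gr0; exists x, u.
have [p [q [m [pqm m_min]]]] := fitzpatrick_le_minimizer Tclosed gr_ne.
have lb := fitzpatrick_le_lb ipP Tclosed pqm.
have near_graph y v : T y v -> ip p q + (`|p| ^+ 2 + `|q| ^+ 2) / 2 +
    (`|p - y| ^+ 2 + `|q - v| ^+ 2) / 2 <= ip y v + (`|y| ^+ 2 + `|v| ^+ 2) / 2.
  by move=> /(fitzpatrick_le_min_graph ipP m_min mon pqm); lra.
have pq_sqr : `|p + q| ^+ 2 = ip p p + 2 * ip p q + ip q q.
  by rewrite -(ip_norm ipP) !(ipE ipP) (ipC ipP q p); ring.
have Tqp : T (- q) (- p).
  apply: closed => y v /near_graph; have := sqr_ge0 `|p + q|.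
  rewrite pq_sqr -!(ip_norm ipP) !(ipE ipP) !opprK.
  by rewrite (ipC ipP y p) (ipC ipP v q) (ipC ipP q p); lra.
have : `|p + q| ^+ 2 <= 0.
  have := near_graph _ _ Tqp.
  by rewrite pq_sqr -!(ip_norm ipP) !(ipE ipP) !opprK (ipC ipP q p); lra.
rewrite -[X in _ <= X](expr0n R 2) ler_pXn2r ?nnegrE // normr_le0 addr_eq0.
by move=> /eqP pq; exists p; rewrite {1}pq.
Qed.

End Minty.

Section Resolvent.
Variables (R : realType) (H : completeNormedModType R) (ip : H -> H -> R).
Hypothesis ipP : is_inner_product ip.
Variable T : H -> set H.
Hypothesis Tclosed : monotonically_closed ip T.
Variable z : H.

(* Minty's theorem applied to [w |-> rho^-1 (T (w + z))]. *)
Lemma resolvent_exists rho : 0 < rho -> exists x, T x (rho^-1 *: (z - x)).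
Proof.
move=> rho0; have [mon closed] := Tclosed.
have rhoK u : rho^-1 *: (rho *: u) = u by rewrite scalerA mulVf ?gt_eqF ?scale1r.
pose S w y := T (w + z) (rho^-1 *: y).
have Sclosed : monotonically_closed ip S.
  split=> [w1 w2 y1 y2 /mon/[apply]|w0 y0 rel0].
    by rewrite -scalerBr (ipZr ipP) opprD addrACA subrr addr0 pmulr_rge0 ?invr_gt0.
  apply: closed => x u Txu; have := rel0 (x - z) (rho *: u); rewrite /S subrK rhoK.
  have -> : u - rho^-1 *: y0 = rho^-1 *: (rho *: u - y0) by rewrite scalerBr rhoK.
  by rewrite (ipZr ipP) opprD addrA addrAC => /(_ Txu); rewrite pmulr_rge0 ?invr_gt0.
have [w Sw] := minty_zero ipP Sclosed.
by exists (w + z); rewrite opprD addrCA subrr addr0.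
Qed.

Lemma resolventP rho : 0 < rho ->
  T (resolvent T rho z) (rho^-1 *: (z - resolvent T rho z)).
Proof.
move=> rho0; have [x Tx] := resolvent_exists rho0.
have : [set x | exists u, T x u /\ z = rho *: u + x] (resolvent T rho z).
  apply: xgetPex; exists x, (rho^-1 *: (z - x)); split => //.
  by rewrite scalerA mulfV ?gt_eqF // scale1r subrK.
move=> [u [Tu ez]]; suff -> : rho^-1 *: (z - resolvent T rho z) = u by [].
by rewrite {1}ez addrK scalerA mulVf ?gt_eqF // scale1r.
Qed.

Lemma resolvent_subr rho : 0 < rho ->
  exists2 u, T (resolvent T rho z) u & resolvent T rho z - z = - (rho *: u).
Proof.
move=> rho0; exists (rho^-1 *: (z - resolvent T rho z)); first exact: resolventP.
by rewrite scalerA mulfV ?gt_eqF // scale1r opprB.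
Qed.

Lemma resolvent_dist_gt0 rho : ~ T z 0 -> 0 < rho -> 0 < `|resolvent T rho z - z|.
Proof.
move=> Tz0 rho0; rewrite normr_gt0 subr_eq0; apply/eqP => Jz.
by apply: Tz0; have := resolventP rho0; rewrite Jz subrr scaler0.
Qed.

(* With [J_i - z = - r_i u_i], [u_i \in T J_i], monotonicity and Cauchy-Schwarz give
   [(|u_1| - |u_2|) (r_1 |u_1| - r_2 |u_2|) <= 0]. *)
Lemma resolvent_dist_monotone r1 r2 : 0 < r1 -> r1 <= r2 ->
  `|resolvent T r1 z - z| <= `|resolvent T r2 z - z| /\
  r1 * `|resolvent T r2 z - z| <= r2 * `|resolvent T r1 z - z|.
Proof.
move=> r1_gt0 r12; have r2_gt0 := lt_le_trans r1_gt0 r12.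
have [u1 Tu1 e1] := resolvent_subr r1_gt0; have [u2 Tu2 e2] := resolvent_subr r2_gt0.
have := (proj1 Tclosed) _ _ _ _ Tu1 Tu2.
rewrite -(subrKA z) e1 -opprB e2 opprK addrC !(ipE ipP) !(ip_norm ipP) (ipC ipP u2 u1).
rewrite !normrN !normrZ !gtr0_norm //.
have := ip_le_normM ipP u1 u2; set a := `|u1|; set b := `|u2| => cs mon.
have b0 : 0 <= b := normr_ge0 u2.
have monab : (a - b) * (r1 * a - r2 * b) <= 0 by nra.
have ba : b <= a.
  rewrite leNgt; apply/negP => ab; have : r1 * a < r2 * b.
    by apply: lt_le_trans (ler_wpM2r b0 r12); rewrite ltr_pM2l.
  by move: monab; nra.
have ra : r1 * a <= r2 * b.
  have [->|nab] := eqVneq a b; first by rewrite ler_wpM2r.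
  have ab : b < a by rewrite lt_def nab ba.
  by move: monab; nra.
split=> //; rewrite mulrCA ler_wpM2l ?(ltW r2_gt0) //.
by rewrite ler_wpM2l ?(ltW r1_gt0).
Qed.

End Resolvent.

Lemma powR_invn_le (R : realType) (n : nat) (x y : R) : (0 < n)%N ->
  0 <= x -> 0 <= y -> x <= y ^+ n -> x `^ n%:R^-1 <= y.
Proof.
move=> n0 x0 y0 xy; have -> : y = (y ^+ n) `^ n%:R^-1.
  by rewrite -powR_mulrn // -powRrM mulfV ?pnatr_eq0 -?lt0n // powRr1.
by apply: ge0_ler_powR; rewrite ?nnegrE ?exprn_ge0.
Qed.

Section Psi.
Variables (R : realType) (a b : R) (d : R -> R).
Hypotheses (a_ge0 : 0 <= a) (b_ge0 : 0 <= b).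
Hypothesis d_gt0 : forall r, 0 < r -> 0 < d r.
Hypothesis d_mono : forall r1 r2, 0 < r1 -> r1 <= r2 ->
  d r1 <= d r2 /\ r1 * d r2 <= r2 * d r1.

Let f r := a * r ^+ 2 + b * r + (r * d r) ^+ 2.

Lemma dist_le_of_monotone r t : 0 < r -> r / 2 <= t ->
  `|d t - d r| <= 2 * (d r / r) * `|t - r|.
Proof.
move=> r0 rt; have t0 : 0 < t by lra.
set k := d r / r; have rk : r * k = d r by rewrite mulrC divfK ?gt_eqF.
have k0 : 0 < k by rewrite divr_gt0 ?d_gt0.
have [rlet|tltr] := leP r t.
  have [dle rdle] := d_mono r0 rlet.
  by rewrite !ger0_norm ?subr_ge0 //; nra.
have [dle rdle] := d_mono t0 (ltW tltr).
by rewrite !ler0_norm ?subr_le0 ?(ltW tltr) //; nra.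
Qed.

Lemma continuous_of_monotone r : 0 < r -> {for r, continuous d}.
Proof.
move=> r0; have /cvgrPdist_lt near_r : t @[t --> r] --> r := cvg_id.
apply/cvgrPdist_lt => e e0; set k := 2 * (d r / r).
have k0 : 0 < k by rewrite !mulr_gt0 ?invr_gt0 ?d_gt0.
apply: filterS2 (near_r _ (divr_gt0 r0 (ltr0Sn R 1))) (near_r _ (divr_gt0 e0 k0)).
move=> t /= rt tr; rewrite distrC in rt tr.
have /(dist_le_of_monotone r0) : r / 2 <= t by move: rt; rewrite ltr_norml; lra.
rewrite distrC -/k => /le_lt_trans; apply.
by rewrite -(ltr_pM2l k0) mulrCA divff ?gt_eqF // mulr1 in tr.
Qed.

Lemma psi_gt0 r : 0 < r -> 0 < f r.
Proof.
move=> r0; have : 0 < (r * d r) ^+ 2 by rewrite exprn_gt0 ?mulr_gt0 ?d_gt0.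
by have := mulr_ge0 a_ge0 (sqr_ge0 r); have := mulr_ge0 b_ge0 (ltW r0); rewrite /f; lra.
Qed.

Lemma psi_lt r1 r2 : 0 < r1 -> r1 < r2 -> f r1 < f r2.
Proof.
move=> r1_gt0 r12; have r2_gt0 := lt_trans r1_gt0 r12.
have [dle _] := d_mono r1_gt0 (ltW r12).
have : (r1 * d r1) ^+ 2 < (r2 * d r2) ^+ 2.
  rewrite ltr_pXn2r ?nnegrE ?mulr_ge0 ?ltW ?d_gt0 //.
  by apply: lt_le_trans (ler_wpM2l (ltW r2_gt0) dle); rewrite ltr_pM2r ?d_gt0.
have : a * r1 ^+ 2 <= a * r2 ^+ 2.
  by rewrite ler_wpM2l // ler_pXn2r ?nnegrE ?ltW.
by have := ler_wpM2l b_ge0 (ltW r12); rewrite /f; lra.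
Qed.

Lemma psi_continuous r : 0 < r -> {for r, continuous f}.
Proof.
move=> r0; have dr := continuous_of_monotone r0.
apply: cvgD; first apply: cvgD.
- by apply: cvgM; [apply: cvg_cst|apply: cvgM; apply: cvg_id].
- by apply: cvgM; [apply: cvg_cst|apply: cvg_id].
by apply: cvgM; apply: cvgM => //; apply: cvg_id.
Qed.

Lemma psi_cvg0 : f r @[r --> 0^'+] --> 0.
Proof.
pose K := a + b + d 1 ^+ 2.
apply: (@squeeze_cvgr _ _ _ _ (fun=> 0) (fun r => r * K)); last 2 first.
- exact: cvg_cst.
- rewrite -[X in _ --> X](mul0r K); apply: cvgM; last exact: cvg_cst.
  by apply: cvg_at_right_filter; apply: cvg_id.
apply: filterS2 (nbhs_right_gt 0) (nbhs_right_le (@ltr01 R)) => r r0 r1.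
rewrite (ltW (psi_gt0 r0)) /=.
have [dle _] := d_mono r0 r1; have dr0 := d_gt0 r0.
have : (r * d r) ^+ 2 <= r * d 1 ^+ 2.
  have : 0 <= r * d r by rewrite mulr_ge0 ?ltW.
  have : r * d r <= r * d 1 by rewrite ler_pM2l.
  nra.
have : r ^+ 2 <= r by rewrite expr2 ger_pMl.
by move=> /(ler_wpM2l a_ge0); rewrite /f /K; lra.
Qed.

Lemma psi_cvgy : f r @[r --> +oo] --> +oo.
Proof.
apply/cvgryPge => A; have d1 := d_gt0 ltr01.
have d1_sqr : 0 < d 1 ^+ 2 by rewrite exprn_gt0.
exists (Num.max 1 (A / d 1 ^+ 2)); split; first exact: num_real.
move=> r; rewrite gt_max => /andP[r1 rA]; have r0 := lt_trans ltr01 r1.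
have [dle _] := d_mono ltr01 (ltW r1).
have : r * d 1 ^+ 2 <= (r * d r) ^+ 2.
  apply: le_trans (_ : (r * d 1) ^+ 2 <= _).
    by rewrite exprMn ler_pM2r // expr2 ler_pMr // ltW.
  have : 0 <= r * d 1 by rewrite mulr_ge0 ?ltW.
  have : r * d 1 <= r * d r by rewrite ler_pM2l.
  nra.
have : A < r * d 1 ^+ 2 by rewrite -ltr_pdivrMr.
have := mulr_ge0 a_ge0 (sqr_ge0 r); have := mulr_ge0 b_ge0 (ltW r0).
by rewrite /f; lra.
Qed.

(* Each summand of [f r] divided by [r^4] is nonincreasing. *)
Lemma psi_ratio r1 r2 : 0 < r1 -> r1 <= r2 -> r1 ^+ 4 * f r2 <= r2 ^+ 4 * f r1.
Proof.
move=> r1_gt0 r12; have r2_gt0 := lt_le_trans r1_gt0 r12.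
have [_ rdle] := d_mono r1_gt0 r12.
have sq n : r1 ^+ n <= r2 ^+ n by apply: lerXn2r; rewrite // nnegrE ltW.
have rr_ge0 : 0 <= r1 ^+ 2 * r2 ^+ 2 by rewrite mulr_ge0 ?sqr_ge0.
have : (r1 * d r2) ^+ 2 <= (r2 * d r1) ^+ 2.
  by apply: lerXn2r; rewrite // nnegrE mulr_ge0 ?ltW ?d_gt0.
move=> /(ler_wpM2l rr_ge0).
have /(ler_wpM2l (mulr_ge0 b_ge0 (mulr_ge0 (ltW r1_gt0) (ltW r2_gt0)))) := sq 3%N.
have /(ler_wpM2l (mulr_ge0 a_ge0 rr_ge0)) := sq 2%N.
by rewrite /f; nra.
Qed.

Lemma psi_ratio_powR r1 r2 : 0 < r1 -> r1 <= r2 -> (f r2 / f r1) `^ 4^-1 <= r2 / r1.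
Proof.
move=> r1_gt0 r12; have r2_gt0 := lt_le_trans r1_gt0 r12.
have f1 := psi_gt0 r1_gt0; have f2 := psi_gt0 r2_gt0.
apply: powR_invn_le; rewrite ?divr_ge0 ?(ltW f1) ?(ltW f2) ?(ltW r1_gt0) ?(ltW r2_gt0) //.
rewrite expr_div_n ler_pdivrMr // mulrAC ler_pdivlMr ?exprn_gt0 // mulrC.
exact: psi_ratio.
Qed.

End Psi.

Section IncreasingLevelSet.
Variables (R : realType) (f : R -> R).
Hypothesis f_lt : forall r1 r2, 0 < r1 -> r1 < r2 -> f r1 < f r2.
Hypothesis f_cont : forall r, 0 < r -> {for r, continuous f}.
Hypothesis f_cvg0 : f r @[r --> 0^'+] --> 0.
Hypothesis f_cvgy : f r @[r --> +oo] --> +oo.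

Lemma increasing_surj th : 0 < th -> exists2 r, 0 < r & f r = th.
Proof.
move=> th0; have [r0 [r00 fr0]] : exists r, 0 < r /\ f r < th.
  apply: (@filter_ex _ (0 : R)^'+).
  by apply: filterS2 (nbhs_right_gt 0) (cvgr_lt _ f_cvg0 _ th0) => r.
have [r1 [r01 fr1]] : exists r, r0 < r /\ th < f r.
  have [M [_ fM]] := (cvgryPgt _).1 f_cvgy th.
  exists (Num.max (M + 1) (r0 + 1)).
  by rewrite !lt_max ltrDl ltr01 orbT fM // lt_max ltrDl ltr01.
have cont : {within `[r0, r1]%classic, continuous f}.
  apply: continuous_in_subspaceT => r.
  rewrite inE /= in_itv /= => /andP[r0r _].
  by apply: f_cont; apply: lt_le_trans r0r.
have [r r01r fr] : exists2 r, r \in `[r0, r1] & f r = th.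
  apply: IVT => //; first exact: ltW.
  by rewrite ge_min le_max (ltW fr0) (ltW fr1) orbT.
move: r01r; rewrite in_itv /= => /andP[r0r _].
by exists r => //; apply: lt_le_trans r0r.
Qed.

Lemma increasing_preimage_itv thm thp : 0 < thm -> thm <= thp ->
  exists rm rp, [set r | 0 < r /\ thm <= f r <= thp] = `[rm, rp]%classic /\
    0 < rm /\ rm <= rp /\ f rm = thm /\ f rp = thp.
Proof.
move=> thm0 thmp; have [rm rm0 frm] := increasing_surj thm0.
have [rp rp0 frp] := increasing_surj (lt_le_trans thm0 thmp).
have f_le r r' : 0 < r -> 0 < r' -> (f r <= f r') = (r <= r').
  move=> r0 r'0; apply/idP/idP; last first.
    by rewrite le_eqVlt => /predU1P[->//|/(f_lt r0)/ltW].
  by apply: contraTT; rewrite -!ltNge => /(f_lt r'0).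
exists rm, rp; split; last by do !split => //; rewrite -f_le // frm frp.
apply/seteqP; split => r /=; rewrite in_itv /=.
  by move=> [r0]; rewrite -frm -frp !f_le.
move=> /andP[rmr rrp]; have r0 := lt_le_trans rm0 rmr.
by split=> //; rewrite -frm -frp !f_le // rmr rrp.
Qed.

End IncreasingLevelSet.

Theorem lemma5p6 (R : realType) (H : completeNormedModType R)
  (ip : H -> H -> R) (T : H -> set H) (a b : R) (z : H) :
  is_inner_product ip -> maximal_monotone ip T ->
  0 <= a -> 0 <= b -> ~ T z 0 ->
  (* (a) *)
  (forall rho : R, 0 < rho -> 0 < psi T a b rho z) /\
  (* (b) *)
  (forall r1 r2 : R, 0 < r1 -> r1 < r2 -> psi T a b r1 z < psi T a b r2 z) /\
  (forall r : R, 0 < r -> {for r, continuous (fun rho => psi T a b rho z)}) /\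
  (psi T a b rho z @[rho --> 0^'+] --> 0) /\
  (psi T a b rho z @[rho --> +oo] --> +oo) /\
  (* (c) *)
  (forall thm thp : R, 0 < thm -> thm < thp ->
     exists rm rp : R,
       [set rho : R | 0 < rho /\ thm <= psi T a b rho z <= thp] = `[rm, rp]%classic /\
       0 < rm /\ rm <= rp /\
       psi T a b rm z = thm /\ psi T a b rp z = thp /\
       (thp / thm) `^ (4^-1) <= rp / rm).
Proof.
move=> ipP /(maximal_monotone_closed ipP) Tclosed a0 b0 Tz0.
pose d r := `|resolvent T r z - z|.
have d_gt0 r : 0 < r -> 0 < d r := resolvent_dist_gt0 ipP Tclosed Tz0.
have d_mono := resolvent_dist_monotone ipP Tclosed z.
have lt := psi_lt a0 b0 d_gt0 d_mono.
have cont := psi_continuous (a := a) (b := b) d_gt0 d_mono.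
have cvg0 := psi_cvg0 a0 b0 d_gt0 d_mono.
have cvgy := psi_cvgy a0 b0 d_gt0 d_mono.
split; first exact: psi_gt0 a0 b0 d_gt0.
split; first exact: lt.
split; first exact: cont.
split; first exact: cvg0.
split; first exact: cvgy.
move=> thm thp thm0 thmp.
have [rm [rp [-> [rm0 [rmp [<- <-]]]]]] :=
  increasing_preimage_itv lt cont cvg0 cvgy thm0 (ltW thmp).
exists rm, rp; do 5 (split => //).
exact: (psi_ratio_powR a0 b0 d_gt0 d_mono rm0 rmp).
Qed.
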